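(* Let $\alpha_1,\alpha_2,\alpha_3>0$ with $\alpha_1^{-2}=\alpha_2^{-2}+\alpha_3^{-2}$, let $a_1=-\alpha_2\alpha_3/\alpha_1$, $a_2=\alpha_3\alpha_1/\alpha_2$, $a_3=\alpha_1\alpha_2/\alpha_3$, let $\lambda>0$ with $\lambda^2=a_2^2-a_1a_3$, and let $b_1,\dots,b_5,c_1,\dots,c_5,d_1,\dots,d_6$ be real constants as in the context (eigenvector data). Let $B,B',C,C',D,D'\in\mathbb{C}$ be arbitrary. Define $w_j:\mathbb{R}\to\mathbb{C}$ by $2w_1=i\alpha_1e^{ia_1t}$, $2w_2=\alpha_2e^{ia_2t}$, $2w_3=\alpha_3e^{ia_3t}$; define $x=2\,\mathrm{Re}\big((Bb_1+Cc_1)e^{\frac i2\lambda t}\big)$, $p_1=ie^{ia_1t}\big(Bb_2e^{\frac i2\lambda t}+\bar Bb_4e^{-\frac i2\lambda t}+Dd_1e^{\frac{3i}2\lambda t}+\bar Dd_4e^{-\frac{3i}2\lambda t}\big)$, $p_2=e^{ia_2t}\big(Cc_2e^{\frac i2\lambda t}+\bar Cc_4e^{-\frac i2\lambda t}+Dd_2e^{\frac{3i}2\lambda t}+\bar Dd_5e^{-\frac{3i}2\lambda t}\big)$, $p_3=e^{ia_3t}\big((Bb_3+Cc_3)e^{\frac i2\lambda t}+(\bar Bb_5+\bar Cc_5)e^{-\frac i2\lambda t}+Dd_3e^{\frac{3i}2\lambda t}+\bar Dd_6e^{-\frac{3i}2\lambda t}\big)$, and define $y,q_1,q_2,q_3$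 by the same formulas with $B,C,D$ replaced by $B',C',D'$ (so $y$ replaces $x$, $q_j$ replaces $p_j$). Let $z:\mathbb{R}\to\mathbb{R}$ and $r_1,r_2,r_3:\mathbb{R}\to\mathbb{C}$ be any functions with $\frac{dz}{dt}=\mathrm{Im}(\bar p_1q_1-\bar p_2q_2-\bar p_3q_3)$, $\frac{dr_1}{dt}=ixp_1+iyq_1+\overline{p_2p_3}+\overline{q_2q_3}$, $\frac{dr_2}{dt}=ixp_2-iyq_2-\overline{p_3p_1}+\overline{q_3q_1}$, $\frac{dr_3}{dt}=ixq_3+iyp_3-\overline{p_1q_2}-\overline{p_2q_1}$. Then the subset of $\mathbb{R}^7=\mathbb{R}\oplus\mathbb{C}^3$ $$M=\Big\{\big(y_1y(t)-y_2x(t)+z(t),\ \tfrac12(y_1^2+y_2^2)w_1(t)+y_1p_1(t)+y_2q_1(t)+r_1(t),\ \tfrac12(y_1^2-y_2^2)w_2(t)+y_1p_2(t)-y_2q_2(t)+r_2(t),\ y_1y_2w_3(t)+y_1q_3(t)+y_2p_3(t)+r_3(t)\big):y_1,y_2,t\in\mathbb{R}\Big\}$$ is an associative 3-fold in $\mathbb{R}^7$ wherever it is nonsingular.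
   Context: Let $(x_1,\dots,x_7)$ be coordinates on $\mathbb{R}^7$ with Euclidean metric $g$, and write $dx_{ijk}=dx_i\wedge dx_j\wedge dx_k$. Define $\varphi=dx_{123}+dx_{145}+dx_{167}+dx_{246}-dx_{257}-dx_{347}-dx_{356}$. An oriented 3-dimensional (immersed) submanifold $N\subseteq\mathbb{R}^7$ is an associative 3-fold if $\varphi|_{T_xN}=\mathrm{vol}_{T_xN}$ for all $x\in N$. Identify $\mathbb{R}^7=\mathbb{R}\oplus\mathbb{C}^3$ via $(x_1,\dots,x_7)\mapsto(x_1,\,x_2+ix_3,\,x_4+ix_5,\,x_6+ix_7)$. Eigenvector data: with $T$ the real $7\times7$ matrix whose rows are $(0,-\frac{\alpha_1}{2},\frac{\alpha_2}{2},\frac{\alpha_3}{2},\frac{\alpha_1}{2},-\frac{\alpha_2}{2},-\frac{\alpha_3}{2})$, $(\alpha_1,-2a_1,0,0,0,-\alpha_3,-\alpha_2)$, $(\alpha_2,0,-2a_2,0,\alpha_3,0,\alpha_1)$, $(\alpha_3,0,0,-2a_3,\alpha_2,\alpha_1,0)$, $(-\alpha_1,0,\alpha_3,\alpha_2,2a_1,0,0)$, $(-\alpha_2,-\alpha_3,0,-\alpha_1,0,2a_2,0)$, $(-\alpha_3,-\alpha_2,-\alpha_1,0,0,0,2a_3)$, the real constants $b_j,c_j,d_j$ are such that $\mathbf{b}_\pm,\mathbf{c}_\pm,\mathbf{d}_\pm$ are nonzero and $T\mathbf{b}_\pm=\pm\lambda\mathbf{b}_\pm$, $T\mathbf{c}_\pm=\pm\lambda\mathbf{c}_\pm$,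 $T\mathbf{d}_\pm=\pm3\lambda\mathbf{d}_\pm$, where $\mathbf{b}_+=(b_1,b_2,0,b_3,b_4,0,b_5)^{\mathrm T}$, $\mathbf{b}_-=(b_1,b_4,0,b_5,b_2,0,b_3)^{\mathrm T}$, $\mathbf{c}_+=(c_1,0,c_2,c_3,0,c_4,c_5)^{\mathrm T}$, $\mathbf{c}_-=(c_1,0,c_4,c_5,0,c_2,c_3)^{\mathrm T}$, $\mathbf{d}_+=(0,d_1,\dots,d_6)^{\mathrm T}$, $\mathbf{d}_-=(0,d_4,d_5,d_6,d_1,d_2,d_3)^{\mathrm T}$. *)

From Stdlib Require Import Reals.
From Coquelicot Require Import Coquelicot.
Open Scope R_scope.

Notation CC := Complex.C.

Definition cexpi (th : R) : CC := (cos th, sin th).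

Definition Tmat (al1 al2 al3 a1 a2 a3 : R) (i j : nat) : R :=
  match i, j with
  | 1,1 => 0 | 1,2 => -(al1/2) | 1,3 => al2/2 | 1,4 => al3/2 | 1,5 => al1/2 | 1,6 => -(al2/2) | 1,7 => -(al3/2)
  | 2,1 => al1 | 2,2 => -(2*a1) | 2,3 => 0 | 2,4 => 0 | 2,5 => 0 | 2,6 => -al3 | 2,7 => -al2
  | 3,1 => al2 | 3,2 => 0 | 3,3 => -(2*a2) | 3,4 => 0 | 3,5 => al3 | 3,6 => 0 | 3,7 => al1
  | 4,1 => al3 | 4,2 => 0 | 4,3 => 0 | 4,4 => -(2*a3) | 4,5 => al2 | 4,6 => al1 | 4,7 => 0
  | 5,1 => -al1 | 5,2 => 0 | 5,3 => al3 | 5,4 => al2 | 5,5 => 2*a1 | 5,6 => 0 | 5,7 => 0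
  | 6,1 => -al2 | 6,2 => -al3 | 6,3 => 0 | 6,4 => -al1 | 6,5 => 0 | 6,6 => 2*a2 | 6,7 => 0
  | 7,1 => -al3 | 7,2 => -al2 | 7,3 => -al1 | 7,4 => 0 | 7,5 => 0 | 7,6 => 0 | 7,7 => 2*a3
  | _,_ => 0
  end.

Definition mv (T : nat -> nat -> R) (v : nat -> R) (i : nat) : R :=
  T i 1%nat * v 1%nat + T i 2%nat * v 2%nat + T i 3%nat * v 3%nat + T i 4%nat * v 4%nat
  + T i 5%nat * v 5%nat + T i 6%nat * v 6%nat + T i 7%nat * v 7%nat.

Definition zero7 : nat -> R := fun _ => 0.

Definition bplus (b : nat -> R) (i : nat) : R :=
  match i with 1 => b 1%nat | 2 => b 2%nat | 4 => b 3%nat | 5 => b 4%nat | 7 => b 5%nat | _ => 0 end.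
Definition bminus (b : nat -> R) (i : nat) : R :=
  match i with 1 => b 1%nat | 2 => b 4%nat | 4 => b 5%nat | 5 => b 2%nat | 7 => b 3%nat | _ => 0 end.
Definition cplus (c : nat -> R) (i : nat) : R :=
  match i with 1 => c 1%nat | 3 => c 2%nat | 4 => c 3%nat | 6 => c 4%nat | 7 => c 5%nat | _ => 0 end.
Definition cminus (c : nat -> R) (i : nat) : R :=
  match i with 1 => c 1%nat | 3 => c 4%nat | 4 => c 5%nat | 6 => c 2%nat | 7 => c 3%nat | _ => 0 end.
Definition dplus (d : nat -> R) (i : nat) : R :=
  match i with 2 => d 1%nat | 3 => d 2%nat | 4 => d 3%nat | 5 => d 4%nat | 6 => d 5%nat | 7 => d 6%nat | _ => 0 end.
Definition dminus (d : nat -> R) (i : nat) : R :=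
  match i with 2 => d 4%nat | 3 => d 5%nat | 4 => d 6%nat | 5 => d 1%nat | 6 => d 2%nat | 7 => d 3%nat | _ => 0 end.

Definition eigvec (T : nat -> nat -> R) (mu : R) (v : nat -> R) : Prop :=
  v <> zero7 /\ forall i, mv T v i = mu * v i.

Local Open Scope C_scope.

Definition xfun (lam : R) (b c : nat -> R) (B C : CC) (t : R) : R :=
  2 * Re ((B * RtoC (b 1%nat) + C * RtoC (c 1%nat)) * cexpi (lam * t / 2)).

Definition p1fun (a1 lam : R) (b d : nat -> R) (B D : CC) (t : R) : CC :=
  Ci * cexpi (a1 * t) *
  (B * RtoC (b 2%nat) * cexpi (lam * t / 2) + Cconj B * RtoC (b 4%nat) * cexpi (- (lam * t / 2))
   + D * RtoC (d 1%nat) * cexpi (3 * lam * t / 2) + Cconj D * RtoC (d 4%nat) * cexpi (- (3 * lam * t / 2))).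

Definition p2fun (a2 lam : R) (c d : nat -> R) (C D : CC) (t : R) : CC :=
  cexpi (a2 * t) *
  (C * RtoC (c 2%nat) * cexpi (lam * t / 2) + Cconj C * RtoC (c 4%nat) * cexpi (- (lam * t / 2))
   + D * RtoC (d 2%nat) * cexpi (3 * lam * t / 2) + Cconj D * RtoC (d 5%nat) * cexpi (- (3 * lam * t / 2))).

Definition p3fun (a3 lam : R) (b c d : nat -> R) (B C D : CC) (t : R) : CC :=
  cexpi (a3 * t) *
  ((B * RtoC (b 3%nat) + C * RtoC (c 3%nat)) * cexpi (lam * t / 2)
   + (Cconj B * RtoC (b 5%nat) + Cconj C * RtoC (c 5%nat)) * cexpi (- (lam * t / 2))
   + D * RtoC (d 3%nat) * cexpi (3 * lam * t / 2) + Cconj D * RtoC (d 6%nat) * cexpi (- (3 * lam * t / 2))).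

Definition w1fun (al1 a1 t : R) : CC := Ci * RtoC al1 * cexpi (a1 * t) / RtoC 2.
Definition w2fun (al2 a2 t : R) : CC := RtoC al2 * cexpi (a2 * t) / RtoC 2.
Definition w3fun (al3 a3 t : R) : CC := RtoC al3 * cexpi (a3 * t) / RtoC 2.

Local Close Scope C_scope.

Definition det3 (u v w : nat -> R) (i j k : nat) : R :=
  u i * (v j * w k - v k * w j) - u j * (v i * w k - v k * w i) + u k * (v i * w j - v j * w i).

Definition phi (u v w : nat -> R) : R :=
  det3 u v w 1 2 3 + det3 u v w 1 4 5 + det3 u v w 1 6 7 + det3 u v w 2 4 6
  - det3 u v w 2 5 7 - det3 u v w 3 4 7 - det3 u v w 3 5 6.

Definition dot7 (u v : nat -> R) : R :=
  u 1%nat * v 1%nat + u 2%nat * v 2%nat + u 3%nat * v 3%nat + u 4%nat * v 4%nat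
  + u 5%nat * v 5%nat + u 6%nat * v 6%nat + u 7%nat * v 7%nat.

(* volume of the parallelepiped spanned by u v w: sqrt of the Gram determinant *)
Definition vol3 (u v w : nat -> R) : R :=
  sqrt (dot7 u u * (dot7 v v * dot7 w w - dot7 v w * dot7 w v)
      - dot7 u v * (dot7 v u * dot7 w w - dot7 v w * dot7 w u)
      + dot7 u w * (dot7 v u * dot7 w v - dot7 v v * dot7 w u)).

Definition lin_indep3 (u v w : nat -> R) : Prop :=
  forall a b c : R, (forall k, (1 <= k <= 7)%nat -> a * u k + b * v k + c * w k = 0) ->
    a = 0 /\ b = 0 /\ c = 0.

(* A map F : R^3 -> R^7 is associative wherever it is nonsingular: at every point where
   its partial derivatives exist and are linearly independent (F is an immersion there),
   the tangent 3-plane is associative, i.e. phi restricted to it is +- the volume form. *)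
Definition associative_where_nonsingular (F : R -> R -> R -> nat -> R) : Prop :=
  forall (s1 s2 t : R) (u v w : nat -> R),
    (forall k, (1 <= k <= 7)%nat -> is_derive (fun s => F s s2 t k) s1 (u k)) ->
    (forall k, (1 <= k <= 7)%nat -> is_derive (fun s => F s1 s t k) s2 (v k)) ->
    (forall k, (1 <= k <= 7)%nat -> is_derive (fun s => F s1 s2 s k) t (w k)) ->
    lin_indep3 u v w ->
    Rabs (phi u v w) = vol3 u v w.

Definition Mmap (X Y Z : R -> R) (W1 W2 W3 P1 P2 P3 Q1 Q2 Q3 R1 R2 R3 : R -> CC)
  (y1 y2 t : R) (k : nat) : R :=
  let c1 := (RtoC ((y1 ^ 2 + y2 ^ 2) / 2) * W1 t + RtoC y1 * P1 t + RtoC y2 * Q1 t + R1 t)%C in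
  let c2 := (RtoC ((y1 ^ 2 - y2 ^ 2) / 2) * W2 t + RtoC y1 * P2 t - RtoC y2 * Q2 t + R2 t)%C in
  let c3 := (RtoC (y1 * y2) * W3 t + RtoC y1 * Q3 t + RtoC y2 * P3 t + R3 t)%C in
  match k with
  | 1 => y1 * Y t - y2 * X t + Z t
  | 2 => Re c1 | 3 => Im c1
  | 4 => Re c2 | 5 => Im c2
  | 6 => Re c3 | 7 => Im c3
  | _ => 0
  end.

(* Associativity is a pointwise condition on the tangent vectors u, v, w, and it holds when
   w = u x v is the G2 cross product: phi(u, v, u x v) = |u x v|^2, which is the volume of
   (u, v, u x v) since u x v is orthogonal to u and v and |u x v|^2 = |u|^2 |v|^2 - <u, v>^2.
   As M is quadratic in (y1, y2), the condition d/dt M = d/dy1 M x d/dy2 M splits by degree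
   into evolution equations: a quadratic system for w, one linear system (with coefficients
   in w) satisfied both by (x, p) and by (y, q), and the equations for z and r, which hold by
   hypothesis.  The given w solves its system because alpha_1 a_1 = - alpha_2 alpha_3,
   alpha_2 a_2 = alpha_3 alpha_1, alpha_3 a_3 = alpha_1 alpha_2 and a_1 + a_2 + a_3 = 0.  Once
   the phases e^{i a_j t} are factored out of p, the linear system has constant coefficients
   given by T, so every eigenvector of T with eigenvalue mu yields a solution oscillating like
   e^{i mu t / 2}; x and p are superpositions of these for mu = +-lambda, +-3 lambda. *)

From Stdlib Require Import Reals Lra Lia.
From Coquelicot Require Import Coquelicot.
Open Scope R_scope.

(** * The cross product of the associative calibration *)

Definition basis_vec (k : nat) : nat -> R := fun j => if Nat.eqb j k then 1 else 0.

Definition cross7 (u v : nat -> R) : nat -> R := fun k => phi u v (basis_vec k).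

Lemma phi_cross7 (u v : nat -> R) : phi u v (cross7 u v) = dot7 (cross7 u v) (cross7 u v).
Proof. unfold cross7, phi, det3, dot7, basis_vec; simpl; ring. Qed.

Lemma dot7_cross7_l (u v : nat -> R) : dot7 u (cross7 u v) = 0.
Proof. unfold cross7, phi, det3, dot7, basis_vec; simpl; ring. Qed.

Lemma dot7_cross7_r (u v : nat -> R) : dot7 v (cross7 u v) = 0.
Proof. unfold cross7, phi, det3, dot7, basis_vec; simpl; ring. Qed.

Lemma dot7_cross7 (u v : nat -> R) :
  dot7 (cross7 u v) (cross7 u v) = dot7 u u * dot7 v v - dot7 u v ^ 2.
Proof. unfold cross7, phi, det3, dot7, basis_vec; simpl; ring. Qed.

Lemma dot7_comm (u v : nat -> R) : dot7 u v = dot7 v u.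
Proof. unfold dot7; ring. Qed.

Lemma phi_cross7_vol3 (u v : nat -> R) : Rabs (phi u v (cross7 u v)) = vol3 u v (cross7 u v).
Proof.
  set (c := cross7 u v).
  assert (Hgram : dot7 u u * (dot7 v v * dot7 c c - dot7 v c * dot7 c v)
      - dot7 u v * (dot7 v u * dot7 c c - dot7 v c * dot7 c u)
      + dot7 u c * (dot7 v u * dot7 c v - dot7 v v * dot7 c u) = dot7 c c ^ 2).
  { rewrite (dot7_comm c u), (dot7_comm c v), (dot7_comm v u).
    unfold c; rewrite dot7_cross7_l, dot7_cross7_r, dot7_cross7; ring. }
  unfold vol3; rewrite Hgram, phi_cross7, sqrt_pow2; [apply Rabs_right |];
    unfold c, dot7; nra.
Qed.

Lemma phi_vol3_ext (u v w u' v' w' : nat -> R) :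
  (forall k, (1 <= k <= 7)%nat -> u k = u' k) ->
  (forall k, (1 <= k <= 7)%nat -> v k = v' k) ->
  (forall k, (1 <= k <= 7)%nat -> w k = w' k) ->
  phi u v w = phi u' v' w' /\ vol3 u v w = vol3 u' v' w'.
Proof.
  intros Hu Hv Hw. unfold phi, det3, vol3, dot7.
  rewrite !Hu, !Hv, !Hw by lia. split; reflexivity.
Qed.

(** * Derivatives of complex-valued functions *)

Lemma is_derive_Re (f : R -> CC) (t : R) (l : CC) :
  is_derive f t l -> is_derive (fun s => Re (f s)) t (Re l).
Proof.
  intros H. eapply filterdiff_ext_lin.
  - apply (filterdiff_comp f fst _ fst H), filterdiff_linear, is_linear_fst.
  - intros y. reflexivity.
Qed.

Lemma is_derive_Im (f : R -> CC) (t : R) (l : CC) :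
  is_derive f t l -> is_derive (fun s => Im (f s)) t (Im l).
Proof.
  intros H. eapply filterdiff_ext_lin.
  - apply (filterdiff_comp f snd _ snd H), filterdiff_linear, is_linear_snd.
  - intros y. reflexivity.
Qed.

Lemma is_derive_C (f : R -> CC) (t : R) (l : CC) :
  is_derive (fun s => Re (f s)) t (Re l) -> is_derive (fun s => Im (f s)) t (Im l) ->
  is_derive f t l.
Proof.
  intros HRe HIm. unfold is_derive in *.
  apply (filterdiff_ext (fun s => (Re (f s), Im (f s)))); [intros s; destruct (f s); reflexivity|].
  eapply filterdiff_ext_lin.
  - apply (filterdiff_comp'_2 _ _ pair t _ _ pair HRe HIm).
    apply filterdiff_linear.
    apply (is_linear_ext (fun p => (fst p, snd p))); [intros []; reflexivity|].
    apply is_linear_prod; [apply is_linear_fst | apply is_linear_snd].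
  - intros y. destruct l. reflexivity.
Qed.

Local Open Scope C_scope.

Lemma is_derive_Cplus (f g : R -> CC) (t : R) (df dg : CC) :
  is_derive f t df -> is_derive g t dg -> is_derive (fun s => f s + g s) t (df + dg).
Proof. exact (is_derive_plus f g t df dg). Qed.

Lemma is_derive_Cminus (f g : R -> CC) (t : R) (df dg : CC) :
  is_derive f t df -> is_derive g t dg -> is_derive (fun s => f s - g s) t (df - dg).
Proof. exact (is_derive_minus f g t df dg). Qed.

Lemma is_derive_Cscal (a : R) (f : R -> CC) (t : R) (df : CC) :
  is_derive f t df -> is_derive (fun s => RtoC a * f s) t (RtoC a * df).
Proof.
  intros Hf; apply is_derive_C.
  - apply (is_derive_ext (fun s => a * Re (f s))%R);
      [intros s; unfold Re, RtoC, Cmult; simpl; ring |].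
    replace (Re (RtoC a * df)) with (a * Re df)%R by (unfold Re, RtoC, Cmult; simpl; ring).
    apply is_derive_scal, is_derive_Re, Hf.
  - apply (is_derive_ext (fun s => a * Im (f s))%R);
      [intros s; unfold Im, RtoC, Cmult; simpl; ring |].
    replace (Im (RtoC a * df)) with (a * Im df)%R by (unfold Im, RtoC, Cmult; simpl; ring).
    apply is_derive_scal, is_derive_Im, Hf.
Qed.

(* is_derive_ext with the pointwise equation stated in CC, where ring applies. *)
Lemma is_derive_Cext (f g : R -> CC) (t : R) (l : CC) :
  (forall s, f s = g s) -> is_derive f t l -> is_derive g t l.
Proof. intros Hfg Hf; exact (is_derive_ext f g t l Hfg Hf). Qed.

Lemma is_derive_defect (f : R -> CC) (t : R) (l l' : CC) :
  is_derive f t l -> l - l' = 0 -> is_derive f t l'.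
Proof. intros Hf E; apply Ceq_minus in E; rewrite <- E; exact Hf. Qed.

Lemma is_derive_defect_R (f : R -> R) (t l l' : R) :
  is_derive f t l -> RtoC l - RtoC l' = 0 -> is_derive f t l'.
Proof. intros Hf E; apply Ceq_minus in E; injection E as <-; exact Hf. Qed.

(** * Reduction to evolution equations *)

Definition vec_of_rc3 (a : R) (z1 z2 z3 : CC) : nat -> R := fun k =>
  match k with 1 => a | 2 => Re z1 | 3 => Im z1 | 4 => Re z2 | 5 => Im z2
  | 6 => Re z3 | 7 => Im z3 | _ => 0 end.

(* d/dt M = d/dy1 M x d/dy2 M as soon as the time derivatives obey the evolution equations. *)
Lemma cross7_tangents (w1 w2 w3 p1 p2 p3 q1 q2 q3 : CC) (X Y y1 y2 : R)
    (dw1 dw2 dw3 dp1 dp2 dp3 dq1 dq2 dq3 dr1 dr2 dr3 : CC) (dX dY dZ : R) :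
  dw1 = RtoC 2 * Cconj (w2 * w3) ->
  dw2 = - (RtoC 2 * Cconj (w1 * w3)) ->
  dw3 = - (RtoC 2 * Cconj (w1 * w2)) ->
  dX = Im (Cconj w1 * p1 - Cconj w2 * p2 - Cconj w3 * p3) ->
  dY = Im (Cconj w1 * q1 - Cconj w2 * q2 - Cconj w3 * q3) ->
  dp1 = Ci * RtoC X * w1 + Cconj (w2 * p3 + p2 * w3) ->
  dq1 = Ci * RtoC Y * w1 + Cconj (w2 * q3 + q2 * w3) ->
  dp2 = Ci * RtoC X * w2 - Cconj (w1 * p3 + p1 * w3) ->
  dq2 = Ci * RtoC Y * w2 - Cconj (w1 * q3 + q1 * w3) ->
  dp3 = Ci * RtoC X * w3 - Cconj (w2 * p1 + w1 * p2) ->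
  dq3 = Ci * RtoC Y * w3 - Cconj (w2 * q1 + w1 * q2) ->
  dZ = Im (Cconj p1 * q1 - Cconj p2 * q2 - Cconj p3 * q3) ->
  dr1 = Ci * RtoC X * p1 + Ci * RtoC Y * q1 + Cconj (p2 * p3) + Cconj (q2 * q3) ->
  dr2 = Ci * RtoC X * p2 - Ci * RtoC Y * q2 - Cconj (p3 * p1) + Cconj (q3 * q1) ->
  dr3 = Ci * RtoC X * q3 + Ci * RtoC Y * p3 - Cconj (p1 * q2) - Cconj (p2 * q1) ->
  forall k, (1 <= k <= 7)%nat ->
  vec_of_rc3 (y1 * dY - y2 * dX + dZ)
      (RtoC ((y1 ^ 2 + y2 ^ 2) / 2) * dw1 + RtoC y1 * dp1 + RtoC y2 * dq1 + dr1)
      (RtoC ((y1 ^ 2 - y2 ^ 2) / 2) * dw2 + RtoC y1 * dp2 - RtoC y2 * dq2 + dr2)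
      (RtoC (y1 * y2) * dw3 + RtoC y1 * dq3 + RtoC y2 * dp3 + dr3) k
  = cross7 (vec_of_rc3 Y (RtoC y1 * w1 + p1) (RtoC y1 * w2 + p2) (RtoC y2 * w3 + q3))
           (vec_of_rc3 (- X) (RtoC y2 * w1 + q1) (- (RtoC y2 * w2) - q2) (RtoC y1 * w3 + p3)) k.
Proof.
  intros; subst.
  destruct w1, w2, w3, p1, p2, p3, q1, q2, q3.
  unfold cross7, phi, det3, basis_vec, vec_of_rc3.
  unfold Cmult, Cplus, Cminus, Copp, Cconj, RtoC, Ci, Re, Im; simpl.
  destruct k as [|[|[|[|[|[|[|[|k]]]]]]]]; try lia; simpl; field.
Qed.

Lemma is_derive_Mmap_y1 X Y Z W1 W2 W3 P1 P2 P3 Q1 Q2 Q3 R1 R2 R3 s1 s2 t k :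
  (1 <= k <= 7)%nat ->
  is_derive (fun s => Mmap X Y Z W1 W2 W3 P1 P2 P3 Q1 Q2 Q3 R1 R2 R3 s s2 t k) s1
    (vec_of_rc3 (Y t) (RtoC s1 * W1 t + P1 t) (RtoC s1 * W2 t + P2 t)
       (RtoC s2 * W3 t + Q3 t) k).
Proof.
  intros Hk; unfold Mmap, vec_of_rc3.
  destruct (W1 t), (W2 t), (W3 t), (P1 t), (P2 t), (P3 t), (Q1 t), (Q2 t), (Q3 t),
    (R1 t), (R2 t), (R3 t).
  destruct k as [|[|[|[|[|[|[|[|k]]]]]]]]; try lia;
    unfold Re, Im, Cmult, Cplus, Cminus, Copp, RtoC; simpl; auto_derive; try exact I; field.
Qed.

Lemma is_derive_Mmap_y2 X Y Z W1 W2 W3 P1 P2 P3 Q1 Q2 Q3 R1 R2 R3 s1 s2 t k :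
  (1 <= k <= 7)%nat ->
  is_derive (fun s => Mmap X Y Z W1 W2 W3 P1 P2 P3 Q1 Q2 Q3 R1 R2 R3 s1 s t k) s2
    (vec_of_rc3 (- X t) (RtoC s2 * W1 t + Q1 t) (- (RtoC s2 * W2 t) - Q2 t)
       (RtoC s1 * W3 t + P3 t) k).
Proof.
  intros Hk; unfold Mmap, vec_of_rc3.
  destruct (W1 t), (W2 t), (W3 t), (P1 t), (P2 t), (P3 t), (Q1 t), (Q2 t), (Q3 t),
    (R1 t), (R2 t), (R3 t).
  destruct k as [|[|[|[|[|[|[|[|k]]]]]]]]; try lia;
    unfold Re, Im, Cmult, Cplus, Cminus, Copp, RtoC; simpl; auto_derive; try exact I; field.
Qed.

Lemma is_derive_Mmap_t X Y Z W1 W2 W3 P1 P2 P3 Q1 Q2 Q3 R1 R2 R3 s1 s2 t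
    dX dY dZ dW1 dW2 dW3 dP1 dP2 dP3 dQ1 dQ2 dQ3 dR1 dR2 dR3 k :
  is_derive X t dX -> is_derive Y t dY -> is_derive Z t dZ ->
  is_derive W1 t dW1 -> is_derive W2 t dW2 -> is_derive W3 t dW3 ->
  is_derive P1 t dP1 -> is_derive P2 t dP2 -> is_derive P3 t dP3 ->
  is_derive Q1 t dQ1 -> is_derive Q2 t dQ2 -> is_derive Q3 t dQ3 ->
  is_derive R1 t dR1 -> is_derive R2 t dR2 -> is_derive R3 t dR3 ->
  (1 <= k <= 7)%nat ->
  is_derive (fun s => Mmap X Y Z W1 W2 W3 P1 P2 P3 Q1 Q2 Q3 R1 R2 R3 s1 s2 s k) t
    (vec_of_rc3 (s1 * dY - s2 * dX + dZ)
      (RtoC ((s1 ^ 2 + s2 ^ 2) / 2) * dW1 + RtoC s1 * dP1 + RtoC s2 * dQ1 + dR1)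
      (RtoC ((s1 ^ 2 - s2 ^ 2) / 2) * dW2 + RtoC s1 * dP2 - RtoC s2 * dQ2 + dR2)
      (RtoC (s1 * s2) * dW3 + RtoC s1 * dQ3 + RtoC s2 * dP3 + dR3) k).
Proof.
  intros HX HY HZ HW1 HW2 HW3 HP1 HP2 HP3 HQ1 HQ2 HQ3 HR1 HR2 HR3 Hk.
  unfold Mmap, vec_of_rc3.
  destruct k as [|[|[|[|[|[|[|[|k]]]]]]]]; try lia; cbv beta iota zeta.
  - apply (is_derive_plus (fun s => s1 * Y s - s2 * X s)%R Z); [|exact HZ].
    apply (is_derive_minus (fun s => s1 * Y s)%R (fun s => s2 * X s)%R);
      apply is_derive_scal; assumption.
  all: first [apply is_derive_Re | apply is_derive_Im];
    repeat first [apply is_derive_Cminus | apply is_derive_Cplus | apply is_derive_Cscal];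
    assumption.
Qed.

Record w_flow (W1 W2 W3 : R -> CC) : Prop := {
  w_flow_1 : forall t, is_derive W1 t (RtoC 2 * Cconj (W2 t * W3 t));
  w_flow_2 : forall t, is_derive W2 t (- (RtoC 2 * Cconj (W1 t * W3 t)));
  w_flow_3 : forall t, is_derive W3 t (- (RtoC 2 * Cconj (W1 t * W2 t))) }.

Record linear_flow (W1 W2 W3 : R -> CC) (X : R -> R) (P1 P2 P3 : R -> CC) : Prop := {
  linear_flow_X : forall t,
    is_derive X t (Im (Cconj (W1 t) * P1 t - Cconj (W2 t) * P2 t - Cconj (W3 t) * P3 t));
  linear_flow_1 : forall t,
    is_derive P1 t (Ci * RtoC (X t) * W1 t + Cconj (W2 t * P3 t + P2 t * W3 t));
  linear_flow_2 : forall t,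
    is_derive P2 t (Ci * RtoC (X t) * W2 t - Cconj (W1 t * P3 t + P1 t * W3 t));
  linear_flow_3 : forall t,
    is_derive P3 t (Ci * RtoC (X t) * W3 t - Cconj (W2 t * P1 t + W1 t * P2 t)) }.

Lemma Mmap_associative X Y Z W1 W2 W3 P1 P2 P3 Q1 Q2 Q3 R1 R2 R3 :
  w_flow W1 W2 W3 ->
  linear_flow W1 W2 W3 X P1 P2 P3 -> linear_flow W1 W2 W3 Y Q1 Q2 Q3 ->
  (forall t, is_derive Z t (Im (Cconj (P1 t) * Q1 t - Cconj (P2 t) * Q2 t
                                - Cconj (P3 t) * Q3 t))) ->
  (forall t, is_derive R1 t (Ci * RtoC (X t) * P1 t + Ci * RtoC (Y t) * Q1 t
                             + Cconj (P2 t * P3 t) + Cconj (Q2 t * Q3 t))) ->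
  (forall t, is_derive R2 t (Ci * RtoC (X t) * P2 t - Ci * RtoC (Y t) * Q2 t
                             - Cconj (P3 t * P1 t) + Cconj (Q3 t * Q1 t))) ->
  (forall t, is_derive R3 t (Ci * RtoC (X t) * Q3 t + Ci * RtoC (Y t) * P3 t
                             - Cconj (P1 t * Q2 t) - Cconj (P2 t * Q1 t))) ->
  associative_where_nonsingular (Mmap X Y Z W1 W2 W3 P1 P2 P3 Q1 Q2 Q3 R1 R2 R3).
Proof.
  intros [HW1 HW2 HW3] [HX HP1 HP2 HP3] [HY HQ1 HQ2 HQ3] HZ HR1 HR2 HR3
    s1 s2 t u v w Hu Hv Hw _.
  set (U := vec_of_rc3 (Y t) (RtoC s1 * W1 t + P1 t) (RtoC s1 * W2 t + P2 t)
              (RtoC s2 * W3 t + Q3 t)).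
  set (V := vec_of_rc3 (- X t) (RtoC s2 * W1 t + Q1 t) (- (RtoC s2 * W2 t) - Q2 t)
              (RtoC s1 * W3 t + P3 t)).
  assert (HuU : forall k, (1 <= k <= 7)%nat -> u k = U k).
  { intros k Hk; rewrite <- (is_derive_unique _ _ _ (Hu k Hk)).
    apply is_derive_unique, is_derive_Mmap_y1, Hk. }
  assert (HvV : forall k, (1 <= k <= 7)%nat -> v k = V k).
  { intros k Hk; rewrite <- (is_derive_unique _ _ _ (Hv k Hk)).
    apply is_derive_unique, is_derive_Mmap_y2, Hk. }
  assert (HwUV : forall k, (1 <= k <= 7)%nat -> w k = cross7 U V k).
  { intros k Hk; rewrite <- (is_derive_unique _ _ _ (Hw k Hk)).
    apply is_derive_unique; unfold U, V.
    erewrite <- cross7_tangents by first [reflexivity | exact Hk].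
    apply is_derive_Mmap_t; auto. }
  destruct (phi_vol3_ext u v w U V (cross7 U V) HuU HvV HwUV) as [-> ->].
  apply phi_cross7_vol3.
Qed.

(** * The explicit solution *)

Lemma cexpi_add (x y : R) : cexpi (x + y) = cexpi x * cexpi y.
Proof. unfold cexpi, Cmult; simpl; rewrite cos_plus, sin_plus; f_equal; ring. Qed.

Lemma cexpi_neq0 (x : R) : cexpi x <> 0.
Proof.
  unfold cexpi; intros H; injection H as Hc Hs.
  pose proof (sin2_cos2 x) as H1; rewrite Hc, Hs in H1; unfold Rsqr in H1; lra.
Qed.

Lemma cexpi_opp (x : R) : cexpi (- x) = / cexpi x.
Proof.
  unfold cexpi, Cinv; simpl; rewrite cos_neg, sin_neg.
  assert (Hn : (cos x * (cos x * 1) + sin x * (sin x * 1))%R = 1%R)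
    by (pose proof (sin2_cos2 x); unfold Rsqr in *; lra).
  rewrite Hn; f_equal; field.
Qed.

Lemma Cconj_cexpi (x : R) : Cconj (cexpi x) = cexpi (- x).
Proof. unfold cexpi, Cconj; simpl; rewrite cos_neg, sin_neg; reflexivity. Qed.

Lemma cexpi_sum_eq0 (a1 a2 a3 t : R) :
  (a1 + a2 + a3 = 0)%R -> cexpi (a1 * t) = / (cexpi (a2 * t) * cexpi (a3 * t)).
Proof.
  intros Ha; rewrite <- cexpi_add, <- cexpi_opp; f_equal.
  replace a1 with (- (a2 + a3))%R by lra; ring.
Qed.

Lemma Cconj_RtoC (r : R) : Cconj (RtoC r) = RtoC r.
Proof. unfold Cconj, RtoC; simpl; f_equal; ring. Qed.

Lemma Cconj_Ci : Cconj Ci = - Ci.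
Proof. unfold Cconj, Ci, Copp; simpl; f_equal; ring. Qed.

Lemma RtoC2_neq0 : RtoC 2 <> 0.
Proof. intros H; injection H; lra. Qed.

Lemma Ci_pow2 : Ci ^ 2 = - RtoC 1.
Proof. unfold Ci, Cpow, Cmult, Copp, RtoC; simpl; f_equal; ring. Qed.

Lemma Ci_pow3 : Ci ^ 3 = - Ci.
Proof. unfold Ci, Cpow, Cmult, Copp, RtoC; simpl; f_equal; ring. Qed.

Lemma Ci_pow4 : Ci ^ 4 = RtoC 1.
Proof. unfold Ci, Cpow, Cmult, Copp, RtoC; simpl; f_equal; ring. Qed.

Definition wave (a lam : R) (k1 k2 k3 k4 : CC) (t : R) : CC :=
  cexpi (a * t) * (k1 * cexpi (lam * t / 2) + k2 * cexpi (- (lam * t / 2))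
                   + k3 * cexpi (3 * lam * t / 2) + k4 * cexpi (- (3 * lam * t / 2))).

Definition wave_deriv (a lam : R) (k1 k2 k3 k4 : CC) (t : R) : CC :=
  Ci * cexpi (a * t) *
    (RtoC (a + lam / 2) * k1 * cexpi (lam * t / 2)
     + RtoC (a - lam / 2) * k2 * cexpi (- (lam * t / 2))
     + RtoC (a + 3 * lam / 2) * k3 * cexpi (3 * lam * t / 2)
     + RtoC (a - 3 * lam / 2) * k4 * cexpi (- (3 * lam * t / 2))).

Ltac derive_components :=
  apply is_derive_C;
  (unfold cexpi, Cdiv, Cinv, Cmult, Cplus, Cminus, Copp, RtoC, Ci, Re, Im; simpl;
   unfold Rdiv; auto_derive; [exact I | field]).

Lemma is_derive_wave (a lam : R) (k1 k2 k3 k4 : CC) (t : R) :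
  is_derive (wave a lam k1 k2 k3 k4) t (wave_deriv a lam k1 k2 k3 k4 t).
Proof. destruct k1, k2, k3, k4; unfold wave, wave_deriv; derive_components. Qed.

Lemma is_derive_cexpi (K : CC) (a t : R) :
  is_derive (fun s => K * cexpi (a * s)) t (Ci * RtoC a * K * cexpi (a * t)).
Proof. destruct K; derive_components. Qed.

Lemma is_derive_xfun (lam : R) (b c : nat -> R) (B C : CC) (t : R) :
  is_derive (xfun lam b c B C) t
    (- lam * Im ((B * RtoC (b 1%nat) + C * RtoC (c 1%nat)) * cexpi (lam * t / 2)))%R.
Proof.
  destruct B, C; unfold xfun, cexpi, Cmult, Cplus, RtoC, Re, Im; simpl.
  unfold Rdiv; auto_derive; [exact I | field].
Qed.

Lemma is_derive_p1fun (a1 lam : R) (b d : nat -> R) (B D : CC) (t : R) :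
  is_derive (p1fun a1 lam b d B D) t
    (wave_deriv a1 lam (Ci * B * RtoC (b 2%nat)) (Ci * Cconj B * RtoC (b 4%nat))
       (Ci * D * RtoC (d 1%nat)) (Ci * Cconj D * RtoC (d 4%nat)) t).
Proof.
  eapply is_derive_Cext; [| apply is_derive_wave].
  intros s; unfold p1fun, wave; ring.
Qed.

Lemma is_derive_p2fun (a2 lam : R) (c d : nat -> R) (C D : CC) (t : R) :
  is_derive (p2fun a2 lam c d C D) t
    (wave_deriv a2 lam (C * RtoC (c 2%nat)) (Cconj C * RtoC (c 4%nat))
       (D * RtoC (d 2%nat)) (Cconj D * RtoC (d 5%nat)) t).
Proof.
  eapply is_derive_Cext; [| apply is_derive_wave].
  intros s; unfold p2fun, wave; ring.
Qed.

Lemma is_derive_p3fun (a3 lam : R) (b c d : nat -> R) (B C D : CC) (t : R) :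
  is_derive (p3fun a3 lam b c d B C D) t
    (wave_deriv a3 lam (B * RtoC (b 3%nat) + C * RtoC (c 3%nat))
       (Cconj B * RtoC (b 5%nat) + Cconj C * RtoC (c 5%nat))
       (D * RtoC (d 3%nat)) (Cconj D * RtoC (d 6%nat)) t).
Proof.
  eapply is_derive_Cext; [| apply is_derive_wave].
  intros s; unfold p3fun, wave; ring.
Qed.

Lemma is_derive_w1fun (al1 a1 t : R) :
  is_derive (w1fun al1 a1) t (Ci * RtoC a1 * (Ci * RtoC al1 / RtoC 2) * cexpi (a1 * t)).
Proof.
  apply (is_derive_Cext (fun s => Ci * RtoC al1 / RtoC 2 * cexpi (a1 * s)));
    [intros s; unfold w1fun, Cdiv; ring | apply is_derive_cexpi].
Qed.

Lemma is_derive_w2fun (al2 a2 t : R) :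
  is_derive (w2fun al2 a2) t (Ci * RtoC a2 * (RtoC al2 / RtoC 2) * cexpi (a2 * t)).
Proof.
  apply (is_derive_Cext (fun s => RtoC al2 / RtoC 2 * cexpi (a2 * s)));
    [intros s; unfold w2fun, Cdiv; ring | apply is_derive_cexpi].
Qed.

Lemma is_derive_w3fun (al3 a3 t : R) :
  is_derive (w3fun al3 a3) t (Ci * RtoC a3 * (RtoC al3 / RtoC 2) * cexpi (a3 * t)).
Proof.
  apply (is_derive_Cext (fun s => RtoC al3 / RtoC 2 * cexpi (a3 * s)));
    [intros s; unfold w3fun, Cdiv; ring | apply is_derive_cexpi].
Qed.

Definition resid (T : nat -> nat -> R) (mu : R) (v : nat -> R) (i : nat) : CC :=
  RtoC (mv T v i - mu * v i).

(* Each evolution equation for the explicit (x, p) holds up to a multiple of this combination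
   of the components i of T v - mu v over the six eigenvectors v. *)
Definition eigen_defect (T : nat -> nat -> R) (lam : R) (b c d : nat -> R) (B C D : CC)
    (t : R) (i : nat) : CC :=
  B * cexpi (lam * t / 2) * resid T lam (bplus b) i
  + Cconj B * cexpi (- (lam * t / 2)) * resid T (- lam) (bminus b) i
  + C * cexpi (lam * t / 2) * resid T lam (cplus c) i
  + Cconj C * cexpi (- (lam * t / 2)) * resid T (- lam) (cminus c) i
  + D * cexpi (3 * lam * t / 2) * resid T (3 * lam) (dplus d) i
  + Cconj D * cexpi (- (3 * lam * t / 2)) * resid T (- (3 * lam)) (dminus d) i.

Definition eigen_data (T : nat -> nat -> R) (lam : R) (b c d : nat -> R) : Prop :=
  eigvec T lam (bplus b) /\ eigvec T (- lam) (bminus b) /\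
  eigvec T lam (cplus c) /\ eigvec T (- lam) (cminus c) /\
  eigvec T (3 * lam) (dplus d) /\ eigvec T (- (3 * lam)) (dminus d).

Lemma resid_eigvec (T : nat -> nat -> R) (mu : R) (v : nat -> R) (i : nat) :
  eigvec T mu v -> resid T mu v i = 0.
Proof. intros [_ Hv]; unfold resid; rewrite Hv, Rminus_diag; reflexivity. Qed.

Lemma eigen_defect_eq0 T lam b c d B C D t i :
  eigen_data T lam b c d -> eigen_defect T lam b c d B C D t i = 0.
Proof.
  intros (Hb & Hb' & Hc & Hc' & Hd & Hd'); unfold eigen_defect.
  rewrite !(resid_eigvec _ _ _ i) by assumption; ring.
Qed.

(* Rewrites every exponential with a negative argument, and cexpi (a1 t), as an inverse, so
   that field_simplify_eq leaves a polynomial identity in Ci and the remaining exponentials. *)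
Ltac defect_field Ha :=
  repeat first
    [ rewrite Cmult_conj | rewrite Cplus_conj | rewrite Cminus_conj | rewrite Copp_conj
    | rewrite Cconj_RtoC | rewrite Cconj_Ci | rewrite Cconj_conj | rewrite Cconj_cexpi
    | rewrite Cdiv_conj by apply RtoC2_neq0 ];
  rewrite ?Ropp_involutive, ?cexpi_opp, ?(cexpi_sum_eq0 _ _ _ _ Ha);
  unfold Rdiv;
  repeat first
    [ rewrite RtoC_plus | rewrite RtoC_mult | rewrite RtoC_minus | rewrite RtoC_opp
    | rewrite RtoC_inv by lra ];
  field_simplify_eq;
  [ rewrite ?Ci_pow2, ?Ci_pow3, ?Ci_pow4; ring
  | repeat split; first [apply cexpi_neq0 | apply RtoC2_neq0 | apply Ci_nz] ].

Lemma p1fun_defect al1 al2 al3 a1 a2 a3 lam b c d B C D t :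
  (a1 + a2 + a3 = 0)%R ->
  wave_deriv a1 lam (Ci * B * RtoC (b 2%nat)) (Ci * Cconj B * RtoC (b 4%nat))
    (Ci * D * RtoC (d 1%nat)) (Ci * Cconj D * RtoC (d 4%nat)) t
  - (Ci * RtoC (xfun lam b c B C t) * w1fun al1 a1 t
     + Cconj (w2fun al2 a2 t * p3fun a3 lam b c d B C D t + p2fun a2 lam c d C D t * w3fun al3 a3 t))
  = cexpi (a1 * t) / RtoC 2 * eigen_defect (Tmat al1 al2 al3 a1 a2 a3) lam b c d B C D t 2.
Proof.
  intros Ha; unfold xfun; rewrite RtoC_mult, re_alt.
  unfold wave_deriv, w1fun, w2fun, w3fun, p2fun, p3fun, eigen_defect, resid.
  cbv [mv Tmat bplus bminus cplus cminus dplus dminus].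
  defect_field Ha.
Qed.

Lemma p2fun_defect al1 al2 al3 a1 a2 a3 lam b c d B C D t :
  (a1 + a2 + a3 = 0)%R ->
  wave_deriv a2 lam (C * RtoC (c 2%nat)) (Cconj C * RtoC (c 4%nat))
    (D * RtoC (d 2%nat)) (Cconj D * RtoC (d 5%nat)) t
  - (Ci * RtoC (xfun lam b c B C t) * w2fun al2 a2 t
     - Cconj (w1fun al1 a1 t * p3fun a3 lam b c d B C D t + p1fun a1 lam b d B D t * w3fun al3 a3 t))
  = - (Ci * cexpi (a2 * t) / RtoC 2) * eigen_defect (Tmat al1 al2 al3 a1 a2 a3) lam b c d B C D t 3.
Proof.
  intros Ha; unfold xfun; rewrite RtoC_mult, re_alt.
  unfold wave_deriv, w1fun, w2fun, w3fun, p1fun, p3fun, eigen_defect, resid.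
  cbv [mv Tmat bplus bminus cplus cminus dplus dminus].
  defect_field Ha.
Qed.

Lemma p3fun_defect al1 al2 al3 a1 a2 a3 lam b c d B C D t :
  (a1 + a2 + a3 = 0)%R ->
  wave_deriv a3 lam (B * RtoC (b 3%nat) + C * RtoC (c 3%nat))
    (Cconj B * RtoC (b 5%nat) + Cconj C * RtoC (c 5%nat))
    (D * RtoC (d 3%nat)) (Cconj D * RtoC (d 6%nat)) t
  - (Ci * RtoC (xfun lam b c B C t) * w3fun al3 a3 t
     - Cconj (w2fun al2 a2 t * p1fun a1 lam b d B D t + w1fun al1 a1 t * p2fun a2 lam c d C D t))
  = - (Ci * cexpi (a3 * t) / RtoC 2) * eigen_defect (Tmat al1 al2 al3 a1 a2 a3) lam b c d B C D t 4.
Proof.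
  intros Ha; unfold xfun; rewrite RtoC_mult, re_alt.
  unfold wave_deriv, w1fun, w2fun, w3fun, p1fun, p2fun, eigen_defect, resid.
  cbv [mv Tmat bplus bminus cplus cminus dplus dminus].
  defect_field Ha.
Qed.

Lemma xfun_defect al1 al2 al3 a1 a2 a3 lam b c d B C D t :
  (a1 + a2 + a3 = 0)%R ->
  RtoC (- lam * Im ((B * RtoC (b 1%nat) + C * RtoC (c 1%nat)) * cexpi (lam * t / 2)))
  - RtoC (Im (Cconj (w1fun al1 a1 t) * p1fun a1 lam b d B D t
              - Cconj (w2fun al2 a2 t) * p2fun a2 lam c d C D t
              - Cconj (w3fun al3 a3 t) * p3fun a3 lam b c d B C D t))
  = - (Ci / RtoC 2) * eigen_defect (Tmat al1 al2 al3 a1 a2 a3) lam b c d B C D t 1.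
Proof.
  intros Ha; rewrite RtoC_mult, RtoC_opp, !im_alt.
  unfold w1fun, w2fun, w3fun, p1fun, p2fun, p3fun, eigen_defect, resid.
  cbv [mv Tmat bplus bminus cplus cminus dplus dminus].
  defect_field Ha.
Qed.

Lemma w1fun_defect al1 al2 al3 a1 a2 a3 t :
  (a1 + a2 + a3 = 0)%R ->
  Ci * RtoC a1 * (Ci * RtoC al1 / RtoC 2) * cexpi (a1 * t)
  - RtoC 2 * Cconj (w2fun al2 a2 t * w3fun al3 a3 t)
  = - (cexpi (a1 * t) / RtoC 2) * RtoC (al1 * a1 + al2 * al3).
Proof. intros Ha; unfold w2fun, w3fun; defect_field Ha. Qed.

Lemma w2fun_defect al1 al2 al3 a1 a2 a3 t :
  (a1 + a2 + a3 = 0)%R ->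
  Ci * RtoC a2 * (RtoC al2 / RtoC 2) * cexpi (a2 * t)
  - - (RtoC 2 * Cconj (w1fun al1 a1 t * w3fun al3 a3 t))
  = Ci * cexpi (a2 * t) / RtoC 2 * RtoC (al2 * a2 - al1 * al3).
Proof. intros Ha; unfold w1fun, w3fun; defect_field Ha. Qed.

Lemma w3fun_defect al1 al2 al3 a1 a2 a3 t :
  (a1 + a2 + a3 = 0)%R ->
  Ci * RtoC a3 * (RtoC al3 / RtoC 2) * cexpi (a3 * t)
  - - (RtoC 2 * Cconj (w1fun al1 a1 t * w2fun al2 a2 t))
  = Ci * cexpi (a3 * t) / RtoC 2 * RtoC (al3 * a3 - al1 * al2).
Proof. intros Ha; unfold w1fun, w2fun; defect_field Ha. Qed.
Lemma explicit_w_flow al1 al2 al3 a1 a2 a3 :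
  (a1 + a2 + a3 = 0)%R ->
  (al1 * a1 + al2 * al3 = 0)%R -> (al2 * a2 - al1 * al3 = 0)%R ->
  (al3 * a3 - al1 * al2 = 0)%R ->
  w_flow (w1fun al1 a1) (w2fun al2 a2) (w3fun al3 a3).
Proof.
  intros Ha H1 H2 H3; split; intros t.
  - apply (is_derive_defect _ _ _ _ (is_derive_w1fun _ _ _)).
    rewrite w1fun_defect, H1 by exact Ha; ring.
  - apply (is_derive_defect _ _ _ _ (is_derive_w2fun _ _ _)).
    rewrite w2fun_defect, H2 by exact Ha; ring.
  - apply (is_derive_defect _ _ _ _ (is_derive_w3fun _ _ _)).
    rewrite w3fun_defect, H3 by exact Ha; ring.
Qed.

Lemma explicit_linear_flow al1 al2 al3 a1 a2 a3 lam b c d B C D :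
  (a1 + a2 + a3 = 0)%R -> eigen_data (Tmat al1 al2 al3 a1 a2 a3) lam b c d ->
  linear_flow (w1fun al1 a1) (w2fun al2 a2) (w3fun al3 a3) (xfun lam b c B C)
    (p1fun a1 lam b d B D) (p2fun a2 lam c d C D) (p3fun a3 lam b c d B C D).
Proof.
  intros Ha Heig; split; intros t.
  - apply (is_derive_defect_R _ _ _ _ (is_derive_xfun _ _ _ _ _ _)).
    rewrite xfun_defect, eigen_defect_eq0 by assumption; ring.
  - apply (is_derive_defect _ _ _ _ (is_derive_p1fun _ _ _ _ _ _ _)).
    rewrite p1fun_defect, eigen_defect_eq0 by assumption; ring.
  - apply (is_derive_defect _ _ _ _ (is_derive_p2fun _ _ _ _ _ _ _)).
    rewrite p2fun_defect, eigen_defect_eq0 by assumption; ring.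
  - apply (is_derive_defect _ _ _ _ (is_derive_p3fun _ _ _ _ _ _ _ _ _)).
    rewrite p3fun_defect, eigen_defect_eq0 by assumption; ring.
Qed.

Local Close Scope C_scope.

Lemma frequency_relations (al1 al2 al3 : R) :
  0 < al1 -> 0 < al2 -> 0 < al3 -> / al1 ^ 2 = / al2 ^ 2 + / al3 ^ 2 ->
  let a1 := - (al2 * al3 / al1) in
  let a2 := al3 * al1 / al2 in
  let a3 := al1 * al2 / al3 in
  a1 + a2 + a3 = 0 /\ al1 * a1 + al2 * al3 = 0 /\
  al2 * a2 - al1 * al3 = 0 /\ al3 * a3 - al1 * al2 = 0.
Proof.
  intros H1 H2 H3 Hal a1 a2 a3; unfold a1, a2, a3.
  assert (Hsq : al1 ^ 2 * (al2 ^ 2 + al3 ^ 2) = al2 ^ 2 * al3 ^ 2).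
  { replace (al2 ^ 2 + al3 ^ 2) with ((/ al2 ^ 2 + / al3 ^ 2) * (al2 ^ 2 * al3 ^ 2))
      by (field; lra).
    rewrite <- Hal; field; lra. }
  repeat split; try (field; lra).
  replace (- (al2 * al3 / al1) + al3 * al1 / al2 + al1 * al2 / al3)
    with ((al1 ^ 2 * (al2 ^ 2 + al3 ^ 2) - al2 ^ 2 * al3 ^ 2) / (al1 * al2 * al3))
    by (field; lra).
  rewrite Hsq; unfold Rdiv; ring.
Qed.

(* The hypotheses on lam only ensure that the eigenvectors exist. *)
Theorem theorem5p6
  (al1 al2 al3 lam : R) (b c d : nat -> R) (B C D B' C' D' : CC)
  (z : R -> R) (r1 r2 r3 : R -> CC) :
  0 < al1 -> 0 < al2 -> 0 < al3 ->
  / al1 ^ 2 = / al2 ^ 2 + / al3 ^ 2 ->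
  let a1 := - (al2 * al3 / al1) in
  let a2 := al3 * al1 / al2 in
  let a3 := al1 * al2 / al3 in
  0 < lam -> lam ^ 2 = a2 ^ 2 - a1 * a3 ->
  let T := Tmat al1 al2 al3 a1 a2 a3 in
  eigvec T lam (bplus b) -> eigvec T (- lam) (bminus b) ->
  eigvec T lam (cplus c) -> eigvec T (- lam) (cminus c) ->
  eigvec T (3 * lam) (dplus d) -> eigvec T (- (3 * lam)) (dminus d) ->
  let x := xfun lam b c B C in
  let p1 := p1fun a1 lam b d B D in
  let p2 := p2fun a2 lam c d C D in
  let p3 := p3fun a3 lam b c d B C D in
  let y := xfun lam b c B' C' in
  let q1 := p1fun a1 lam b d B' D' in
  let q2 := p2fun a2 lam c d C' D' in
  let q3 := p3fun a3 lam b c d B' C' D' in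
  (forall t, is_derive z t
     (Im (Cconj (p1 t) * q1 t - Cconj (p2 t) * q2 t - Cconj (p3 t) * q3 t)%C)) ->
  (forall t, is_derive r1 t
     (Ci * RtoC (x t) * p1 t + Ci * RtoC (y t) * q1 t
      + Cconj (p2 t * p3 t) + Cconj (q2 t * q3 t))%C) ->
  (forall t, is_derive r2 t
     (Ci * RtoC (x t) * p2 t - Ci * RtoC (y t) * q2 t
      - Cconj (p3 t * p1 t) + Cconj (q3 t * q1 t))%C) ->
  (forall t, is_derive r3 t
     (Ci * RtoC (x t) * q3 t + Ci * RtoC (y t) * p3 t
      - Cconj (p1 t * q2 t) - Cconj (p2 t * q1 t))%C) ->
  associative_where_nonsingular
    (Mmap x y z (w1fun al1 a1) (w2fun al2 a2) (w3fun al3 a3)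
       p1 p2 p3 q1 q2 q3 r1 r2 r3).
Proof.
  intros H1 H2 H3 Hal a1 a2 a3 _ _ T Hbp Hbm Hcp Hcm Hdp Hdm
    x p1 p2 p3 y q1 q2 q3 Hz Hr1 Hr2 Hr3.
  destruct (frequency_relations al1 al2 al3 H1 H2 H3 Hal) as (Ha & Hw1 & Hw2 & Hw3).
  assert (Heig : eigen_data T lam b c d) by (unfold eigen_data; tauto).
  apply Mmap_associative; try assumption.
  - apply explicit_w_flow; assumption.
  - apply explicit_linear_flow; assumption.
  - apply explicit_linear_flow; assumption.
Qed.
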